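(* Let $Q$ be a positive definite quadratic form on $\mathbb{R}^2$, let $\Lambda\subseteq\mathbb{R}^2$ be a lattice of rank $2$, and let $v\in\mathbb{R}^2$. Let $c=\min_{w\in\Lambda}Q(v-w)$ and $\lambda=\min_{w\in\Lambda\setminus\{0\}}Q(w)$. Then there exists a set $P\subseteq\Lambda$ of four points forming the vertices of a translated fundamental parallelogram of $\Lambda$ (i.e. $P=\{w_0,w_0+u_1,w_0+u_2,w_0+u_1+u_2\}$ with $w_0\in\Lambda$ and $u_1,u_2$ a basis of $\Lambda$) such that $Q(v-w)\ge c+\lambda$ for all $w\in\Lambda\setminus P$. *)

From mathcomp Require Import all_boot all_order all_algebra.
From mathcomp Require Import reals.
Set Implicit Arguments. Unset Strict Implicit. Unset Printing Implicit Defensive.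
Import Order.TTheory GRing.Theory Num.Theory.
Local Open Scope ring_scope.

Section Defs.
Variable R : realType.
Definition pt := (R * R)%type.

Definition padd (p q : pt) : pt := (p.1 + q.1, p.2 + q.2).
Definition psub (p q : pt) : pt := (p.1 - q.1, p.2 - q.2).
Definition pzscale (m : int) (p : pt) : pt := (m%:~R * p.1, m%:~R * p.2).
Definition pdet (p q : pt) : R := p.1 * q.2 - p.2 * q.1.

Definition qform (a b c : R) (p : pt) : R := a * p.1 ^+ 2 + b * p.1 * p.2 + c * p.2 ^+ 2.

Definition pos_def (a b c : R) : Prop := forall p : pt, p <> (0, 0) -> 0 < qform a b c p.

Definition in_lattice (b1 b2 : pt) (w : pt) : Prop :=
  exists m n : int, w = padd (pzscale m b1) (pzscale n b2).

Definition lattice_basis (b1 b2 u1 u2 : pt) : Prop :=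
  [/\ in_lattice b1 b2 u1, in_lattice b1 b2 u2, pdet u1 u2 <> 0 &
      forall w, in_lattice b1 b2 w -> in_lattice u1 u2 w].
End Defs.

From mathcomp Require Import all_boot all_order all_algebra.
From mathcomp Require Import reals.
From mathcomp Require Import ring lra zify.
Set Implicit Arguments.
Unset Strict Implicit.
Unset Printing Implicit Defensive.
Import Order.TTheory GRing.Theory Num.Theory.
Local Open Scope ring_scope.

(* A shortest nonzero vector e1 of the lattice is primitive, so it extends to a
   basis (e1, e2); replacing e2 by k e1 - e2 for a suitable integer k makes
   (e1, e2, -e1-e2) an obtuse superbase.  In these coordinates
   2Q(x e1 + y e2) = p12 (x - y)^2 + p13 x^2 + p23 y^2 with nonnegative
   Selling parameters whose pairwise sums 2Q(e1), 2Q(e2), 2Q(e1+e2) are at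
   least 2 lam.  After translating v into the triangle 0 <= y <= x <= 1
   (swapping e1 and e2 if needed), every lattice point other than (0,0), (1,0),
   (1,1), (2,1), (0,1), (0,-1) has a neighbour one step closer to v in two of
   the three Selling directions, which is closer by at least lam.  By the
   parallelogram law at most one of (2,1), (0,1), (0,-1) lies within cmin + lam,
   and the triangle together with that point is a fundamental parallelogram. *)

Definition zdet (u1 u2 : int * int) : int := u1.1 * u2.2 - u1.2 * u2.1.

Definition parallelogram (w0 u1 u2 : int * int) : seq (int * int) :=
  [:: w0; w0 + u1; w0 + u2; w0 + u1 + u2].

Definition holds_off_parallelogram (P : pred (int * int)) : Prop :=
  exists w0 u1 u2, `|zdet u1 u2| = 1 /\ forall k, k \notin parallelogram w0 u1 u2 -> P k.

Lemma holds_off_parallelogram_sub (P P' : pred (int * int)) :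
  (forall k, P k -> P' k) -> holds_off_parallelogram P -> holds_off_parallelogram P'.
Proof.
by move=> PP' [w0 [u1 [u2 [hu hP]]]]; exists w0, u1, u2; split=> // k /hP /PP'.
Qed.

Lemma holds_off_parallelogram_shift (d : int * int) (P P' : pred (int * int)) :
  (forall k, P k -> P' (k + d)) ->
  holds_off_parallelogram P -> holds_off_parallelogram P'.
Proof.
move=> PP' [w0 [u1 [u2 [hu hP]]]]; exists (w0 + d), u1, u2; split=> // k hk.
rewrite -(subrK d k); apply/PP'/hP; apply: contra hk.
by rewrite !inE !subr_eq !(addrAC _ d).
Qed.

Lemma holds_off_parallelogram_swap (P P' : pred (int * int)) :
  (forall k, P k -> P' (swap_pair k)) ->
  holds_off_parallelogram P -> holds_off_parallelogram P'.
Proof.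
move=> PP' [w0 [u1 [u2 [hu hP]]]].
exists (swap_pair w0), (swap_pair u1), (swap_pair u2); split.
  by move: hu; rewrite /zdet /=; lia.
move=> [M N] hk; apply: (PP' (N, M)); apply/hP; apply: contra hk.
case: w0 u1 u2 {hu hP} => [x0 y0] [x1 y1] [x2 y2].
by rewrite !inE !xpair_eqE /= !(andbC (M == _)).
Qed.

Section SellingForm.
Variable R : realType.

(* With the Selling parameters of an obtuse superbase (e1, e2, -e1-e2), this is
   2Q(x e1 + y e2); see qform_sub_selling_dist. *)
Definition selling_form (p12 p13 p23 x y : R) : R :=
  p12 * (x - y) ^+ 2 + p13 * x ^+ 2 + p23 * y ^+ 2.

Definition selling_dist (p12 p13 p23 s t : R) (k : int * int) : R :=
  selling_form p12 p13 p23 (s - k.1%:~R) (t - k.2%:~R).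

Lemma selling_dist_shift p12 p13 p23 s t (d k : int * int) :
  selling_dist p12 p13 p23 s t k =
  selling_dist p12 p13 p23 (s - d.1%:~R) (t - d.2%:~R) (k - d).
Proof. by rewrite /selling_dist /selling_form /=; ring. Qed.

Lemma selling_dist_swap p12 p13 p23 s t (k : int * int) :
  selling_dist p12 p13 p23 s t k = selling_dist p12 p23 p13 t s (swap_pair k).
Proof. by rewrite /selling_dist /selling_form /=; ring. Qed.

Lemma selling_dist_parallelogram_law p12 p13 p23 s t (k u : int * int) :
  selling_dist p12 p13 p23 s t (k + u) + selling_dist p12 p13 p23 s t (k - u) =
  2 * selling_dist p12 p13 p23 s t k + 2 * selling_form p12 p13 p23 u.1%:~R u.2%:~R.
Proof. by rewrite /selling_dist /selling_form /=; ring. Qed.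

Lemma sqr_gain_up {x : R} {j : int} :
  0 <= x <= 1 -> 2 <= j -> 1 <= (x - j%:~R) ^+ 2 - (x - (j - 1)%:~R) ^+ 2.
Proof. by move=> /andP[x0 x1]; rewrite -(ler_int R) => hj; nra. Qed.

Lemma sqr_gain_down {x : R} {j : int} :
  0 <= x <= 1 -> j <= -1 -> 1 <= (x - j%:~R) ^+ 2 - (x - (j + 1)%:~R) ^+ 2.
Proof. by move=> /andP[x0 x1]; rewrite -(ler_int R) => hj; nra. Qed.

(* The pairwise sums are the values of selling_form at (1,0), (0,1) and (1,1). *)
Definition admissible_weights (p12 p13 p23 l : R) : Prop :=
  [/\ 0 <= p12, 0 <= p13 & 0 <= p23] /\
  [/\ l <= p12 + p13, l <= p12 + p23 & l <= p13 + p23].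

(* The triangle (0,0), (1,0), (1,1) and the three points completing it to a
   parallelogram. *)
Definition near_points : seq (int * int) :=
  [:: (0, 0); (1, 0); (1, 1); (2, 1); (0, 1); (0, -1)].

Lemma near_or_far_point (M N : int) :
  (M, N) \in near_points \/
  (2 <= M /\ 2 <= N) \/ (M <= -1 /\ N <= -1) \/ (2 <= M /\ 2 <= M - N) \/
  (M <= -1 /\ M - N <= -1) \/ (2 <= N /\ M - N <= -1) \/ (N <= -1 /\ 2 <= M - N).
Proof.
have [M2|M1] := lerP 2 M.
  have [N2|N1] := lerP 2 N; first by right; left.
  have [K2|K1] := lerP 2 (M - N); first by do 3 right; left.
  by left; have [-> ->] : M = 2 /\ N = 1 by lia.
have [M0|Mn] := lerP 0 M; last first.
  have [Nn|N0] := lerP N (-1); first by do 2 right; left.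
  have [Kn|K0] := lerP (M - N) (-1); first by do 4 right; left.
  by lia.
have [N2|N1] := lerP 2 N; first by do 5 right; left; lia.
have [N0|Nn] := lerP 0 N.
  have MN : M = 0 \/ M = 1 by lia.
  have NN : N = 0 \/ N = 1 by lia.
  by left; case: MN NN => -> [] ->.
have [K2|K1] := lerP 2 (M - N); first by do 6 right; lia.
by left; have [-> ->] : M = 0 /\ N = -1 by lia.
Qed.

Section Reduced.
Variables (p12 p13 p23 l c s t : R).

Local Notation F := (selling_dist p12 p13 p23 s t).

Lemma selling_dist_far :
  admissible_weights p12 p13 p23 l -> 0 <= t -> t <= s -> s <= 1 ->
  (forall k, c <= F k) -> forall k, k \notin near_points -> c + l <= F k.
Proof.
move=> [[p12_ge0 p13_ge0 p23_ge0] [l12_13 l12_23 l13_23]] t_ge0 t_le_s s_le1 c_le.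
move=> [M N] /negP far.
have s01 : 0 <= s <= 1 by apply/andP; split; lra.
have t01 : 0 <= t <= 1 by apply/andP; split; lra.
have st01 : 0 <= s - t <= 1 by apply/andP; split; lra.
(* A unit step back towards the triangle in two of the three coordinates M, N,
   M - N gains at least the sum of the two corresponding weights. *)
have [//|[[hM hN]|[[hM hN]|[[hM hK]|[[hM hK]|[[hN hK]|[hN hK]]]]]]] :=
  near_or_far_point M N.
- have := c_le (M - 1, N - 1).
  have := ler_peMr p13_ge0 (sqr_gain_up s01 hM).
  have := ler_peMr p23_ge0 (sqr_gain_up t01 hN).
  rewrite /selling_dist /selling_form /=; lra.
- have := c_le (M + 1, N + 1).
  have := ler_peMr p13_ge0 (sqr_gain_down s01 hM).
  have := ler_peMr p23_ge0 (sqr_gain_down t01 hN).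
  rewrite /selling_dist /selling_form /=; lra.
- have := c_le (M - 1, N).
  have := ler_peMr p13_ge0 (sqr_gain_up s01 hM).
  have := ler_peMr p12_ge0 (sqr_gain_up st01 hK).
  rewrite /selling_dist /selling_form /=; lra.
- have := c_le (M + 1, N).
  have := ler_peMr p13_ge0 (sqr_gain_down s01 hM).
  have := ler_peMr p12_ge0 (sqr_gain_down st01 hK).
  rewrite /selling_dist /selling_form /=; lra.
- have := c_le (M, N - 1).
  have := ler_peMr p23_ge0 (sqr_gain_up t01 hN).
  have := ler_peMr p12_ge0 (sqr_gain_down st01 hK).
  rewrite /selling_dist /selling_form /=; lra.
- have := c_le (M, N + 1).
  have := ler_peMr p23_ge0 (sqr_gain_down t01 hN).
  have := ler_peMr p12_ge0 (sqr_gain_up st01 hK).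
  rewrite /selling_dist /selling_form /=; lra.
Qed.

Lemma selling_dist_far_add_or_sub (k u : int * int) :
  (forall k, c <= F k) -> l <= selling_form p12 p13 p23 u.1%:~R u.2%:~R ->
  (c + l <= F (k + u)) || (c + l <= F (k - u)).
Proof.
move=> c_le lu; have law := selling_dist_parallelogram_law p12 p13 p23 s t k u.
have ck := c_le k.
have [//|lt1] := lerP (c + l) (F (k + u)).
have [//|lt2] := lerP (c + l) (F (k - u)).
lra.
Qed.

Lemma holds_off_parallelogram_reduced :
  admissible_weights p12 p13 p23 l -> 0 <= t -> t <= s -> s <= 1 ->
  (forall k, c <= F k) -> holds_off_parallelogram (fun k => c + l <= F k).
Proof.
move=> hw t_ge0 t_le_s s_le1 c_le.
have [_ [l12_13 l12_23 l13_23]] := hw.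
have far := selling_dist_far hw t_ge0 t_le_s s_le1 c_le.
have pick w0 u1 u2 : `|zdet u1 u2| = 1 ->
    all (fun k => (k \in parallelogram w0 u1 u2) || (c + l <= F k)) near_points ->
    holds_off_parallelogram (fun k => c + l <= F k).
  move=> hu /allP near; exists w0, u1, u2; split=> // k hk.
  have [/near|/far //] := boolP (k \in near_points).
  by rewrite (negbTE hk).
(* Any two of (2,1), (0,1), (0,-1) are symmetric about a vertex of the
   triangle, so by the parallelogram law at most one of them is not far. *)
have h1 : (c + l <= F (2, 1)) || (c + l <= F (0, 1)).
  apply: (@selling_dist_far_add_or_sub (1, 1) (1, 0)) => //.
  by rewrite /selling_form /=; lra.
have h2 : (c + l <= F (2, 1)) || (c + l <= F (0, -1)).
  apply: (@selling_dist_far_add_or_sub (1, 0) (1, 1)) => //.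
  by rewrite /selling_form /=; lra.
have h3 : (c + l <= F (0, 1)) || (c + l <= F (0, -1)).
  apply: (@selling_dist_far_add_or_sub (0, 0) (0, 1)) => //.
  by rewrite /selling_form /=; lra.
have [h21|h21] := boolP (c + l <= F (2, 1)); last first.
  apply: (pick (0, 0) (1, 0) (1, 1)) => //=.
  by move: h1 h2; rewrite (negbTE h21) /= => -> ->.
have [h01|h01] := boolP (c + l <= F (0, 1)).
  by apply: (pick (0, -1) (0, 1) (1, 1)) => //=; rewrite h21 h01.
apply: (pick (0, 0) (1, 0) (0, 1)) => //=.
by move: h3; rewrite (negbTE h01) /= h21 => ->.
Qed.

End Reduced.

Lemma admissible_weights_swap p12 p13 p23 l :
  admissible_weights p12 p13 p23 l -> admissible_weights p12 p23 p13 l.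
Proof. by move=> [[? ? ?] [? ? ?]]; split; split; rewrite // addrC. Qed.

Lemma selling_dist_holds_off_parallelogram p12 p13 p23 l c s t :
  admissible_weights p12 p13 p23 l -> (forall k, c <= selling_dist p12 p13 p23 s t k) ->
  holds_off_parallelogram (fun k => c + l <= selling_dist p12 p13 p23 s t k).
Proof.
move=> hw c_le; pose d := (Num.floor s, Num.floor t).
pose s' := s - d.1%:~R; pose t' := t - d.2%:~R.
have [s'_ge0 s'_lt1] : 0 <= s' /\ s' < 1.
  by have := floor_le s; have := floorD1_gt s; rewrite /s' /= intrD; lra.
have [t'_ge0 t'_lt1] : 0 <= t' /\ t' < 1.
  by have := floor_le t; have := floorD1_gt t; rewrite /t' /= intrD; lra.
have c_le' k : c <= selling_dist p12 p13 p23 s' t' k.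
  by have := c_le (k + d); rewrite (selling_dist_shift _ _ _ s t d) addrK.
apply: (holds_off_parallelogram_shift (d := d)
  (P := fun k => c + l <= selling_dist p12 p13 p23 s' t' k)).
  by move=> k; rewrite (selling_dist_shift _ _ _ s t d) addrK.
have [t'_le_s'|s'_lt_t'] := lerP t' s'.
  by apply: holds_off_parallelogram_reduced => //; rewrite ltW.
apply: (holds_off_parallelogram_swap
  (P := fun k => c + l <= selling_dist p12 p23 p13 t' s' k)).
  by move=> k; rewrite -selling_dist_swap.
apply: holds_off_parallelogram_reduced.
- exact: admissible_weights_swap.
- exact: s'_ge0.
- exact: ltW.
- exact: ltW.
- by move=> k; have := c_le' (swap_pair k); rewrite selling_dist_swap.
Qed.

End SellingForm.

Section Lattice.
Variable R : realType.

Definition zcomb (e1 e2 : pt R) (k : int * int) : pt R :=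
  padd (pzscale k.1 e1) (pzscale k.2 e2).

Definition rcomb (e1 e2 : pt R) (x y : R) : pt R :=
  (x * e1.1 + y * e2.1, x * e1.2 + y * e2.2).

Lemma in_latticeP (e1 e2 w : pt R) : in_lattice e1 e2 w <-> exists k, w = zcomb e1 e2 k.
Proof. by split=> [[m [n ->]]|[[m n] ->]]; [exists (m, n) | exists m, n]. Qed.

Lemma zcomb_in_lattice (e1 e2 : pt R) k : in_lattice e1 e2 (zcomb e1 e2 k).
Proof. by apply/in_latticeP; exists k. Qed.

Lemma zcomb_add (e1 e2 : pt R) k k' :
  zcomb e1 e2 (k + k') = padd (zcomb e1 e2 k) (zcomb e1 e2 k').
Proof. by rewrite /zcomb /padd /pzscale /=; congr pair; ring. Qed.

Lemma zcomb10 (e1 e2 : pt R) : zcomb e1 e2 (1, 0) = e1.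
Proof. by case: e1 => x y; rewrite /zcomb /padd /pzscale /=; congr pair; ring. Qed.

Lemma zcomb01 (e1 e2 : pt R) : zcomb e1 e2 (0, 1) = e2.
Proof. by case: e2 => x y; rewrite /zcomb /padd /pzscale /=; congr pair; ring. Qed.

Lemma zcomb11 (e1 e2 : pt R) : zcomb e1 e2 (1, 1) = padd e1 e2.
Proof. by rewrite /zcomb /padd /pzscale /=; congr pair; ring. Qed.

Lemma zcomb_comp (e1 e2 : pt R) (u1 u2 k : int * int) :
  zcomb (zcomb e1 e2 u1) (zcomb e1 e2 u2) k =
  zcomb e1 e2 (k.1 * u1.1 + k.2 * u2.1, k.1 * u1.2 + k.2 * u2.2).
Proof. by rewrite /zcomb /padd /pzscale /=; congr pair; ring. Qed.

Lemma pdet_zcomb (e1 e2 : pt R) (u1 u2 : int * int) :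
  pdet (zcomb e1 e2 u1) (zcomb e1 e2 u2) = (zdet u1 u2)%:~R * pdet e1 e2.
Proof. by rewrite /zcomb /pdet /zdet /padd /pzscale /=; ring. Qed.

Lemma zcomb_neq0 {e1 e2 : pt R} {k : int * int} :
  pdet e1 e2 <> 0 -> k != 0 -> zcomb e1 e2 k <> (0, 0).
Proof.
case: k => m n /eqP /negPf det0 k0 hk.
have : m%:~R * pdet e1 e2 = e2.2 * (zcomb e1 e2 (m, n)).1 - e2.1 * (zcomb e1 e2 (m, n)).2.
  by rewrite /pdet /zcomb /padd /pzscale /=; ring.
have : n%:~R * pdet e1 e2 = e1.1 * (zcomb e1 e2 (m, n)).2 - e1.2 * (zcomb e1 e2 (m, n)).1.
  by rewrite /pdet /zcomb /padd /pzscale /=; ring.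
rewrite hk /= !mulr0 subrr => /eqP + /eqP; rewrite !mulf_eq0 !intr_eq0 det0 !orbF.
by move=> /eqP n0 /eqP m0; move: k0; rewrite m0 n0.
Qed.

Lemma in_lattice_trans (b1 b2 e1 e2 w : pt R) :
  in_lattice b1 b2 e1 -> in_lattice b1 b2 e2 -> in_lattice e1 e2 w -> in_lattice b1 b2 w.
Proof.
move=> /in_latticeP[u1 ->] /in_latticeP[u2 ->] /in_latticeP[k ->].
by rewrite zcomb_comp; apply: zcomb_in_lattice.
Qed.

Lemma in_lattice_unimodular {e1 e2 : pt R} {u1 u2 : int * int} :
  `|zdet u1 u2| = 1 ->
  forall w, in_lattice e1 e2 w -> in_lattice (zcomb e1 e2 u1) (zcomb e1 e2 u2) w.
Proof.
move=> hu w /in_latticeP[[m n] ->]; apply/in_latticeP.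
set d := zdet u1 u2; have dd : d * d = 1 by lia.
(* The inverse of a unimodular matrix is d times its adjugate, as d^-1 = d. *)
exists (d * (m * u2.2 - n * u2.1), d * (n * u1.1 - m * u1.2)).
rewrite zcomb_comp /=; congr (zcomb _ _ (_, _)).
  by rewrite -[m in LHS]mul1r -dd /d /zdet; ring.
by rewrite -[n in LHS]mul1r -dd /d /zdet; ring.
Qed.

Lemma lattice_basis_refl (b1 b2 : pt R) : pdet b1 b2 <> 0 -> lattice_basis b1 b2 b1 b2.
Proof.
move=> hdet; split=> //.
- by rewrite -[X in in_lattice _ _ X](zcomb10 b1 b2); apply: zcomb_in_lattice.
- by rewrite -[X in in_lattice _ _ X](zcomb01 b1 b2); apply: zcomb_in_lattice.
Qed.

Lemma lattice_basis_unimodular (b1 b2 e1 e2 : pt R) (u1 u2 : int * int) :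
  lattice_basis b1 b2 e1 e2 -> `|zdet u1 u2| = 1 ->
  lattice_basis b1 b2 (zcomb e1 e2 u1) (zcomb e1 e2 u2).
Proof.
move=> [he1 he2 hdet hsub] hu; split.
- exact: in_lattice_trans he1 he2 (zcomb_in_lattice _ _ _).
- exact: in_lattice_trans he1 he2 (zcomb_in_lattice _ _ _).
- rewrite pdet_zcomb => /eqP; rewrite mulf_eq0 intr_eq0 => /orP[/eqP d0|/eqP //].
  by move: hu; rewrite d0.
- by move=> w /hsub /(in_lattice_unimodular hu).
Qed.

Lemma rcomb_coords (e1 e2 v : pt R) : pdet e1 e2 <> 0 -> exists s t, v = rcomb e1 e2 s t.
Proof.
rewrite /pdet => /eqP hdet; exists (pdet v e2 / pdet e1 e2), (pdet e1 v / pdet e1 e2).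
by case: v => x y; rewrite /rcomb /pdet /=; congr pair; field.
Qed.

Lemma coprime_coords_extend_to_basis (b1 b2 e1 e2 : pt R) (k : int * int) :
  lattice_basis b1 b2 e1 e2 -> gcdz k.1 k.2 = 1 ->
  exists f, lattice_basis b1 b2 (zcomb e1 e2 k) f.
Proof.
move=> he hk; have [u [v uv]] := Bezoutz k.1 k.2.
exists (zcomb e1 e2 (- v, u)); apply: lattice_basis_unimodular => //.
by move: uv; rewrite hk /zdet /=; lia.
Qed.

Lemma lattice_parallelogram (P : pred (pt R)) (b1 b2 e1 e2 : pt R) :
  lattice_basis b1 b2 e1 e2 -> holds_off_parallelogram (fun k => P (zcomb e1 e2 k)) ->
  exists w0 u1 u2 : pt R, [/\ in_lattice b1 b2 w0, lattice_basis b1 b2 u1 u2 &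
    forall w, in_lattice b1 b2 w -> w <> w0 -> w <> padd w0 u1 -> w <> padd w0 u2 ->
      w <> padd (padd w0 u1) u2 -> P w].
Proof.
move=> he [k0 [u1 [u2 [hu hP]]]]; have [he1 he2 _ hsub] := he.
exists (zcomb e1 e2 k0), (zcomb e1 e2 u1), (zcomb e1 e2 u2); split.
- exact: in_lattice_trans he1 he2 (zcomb_in_lattice _ _ _).
- exact: lattice_basis_unimodular.
- move=> w /hsub /in_latticeP[k ->]; rewrite -!zcomb_add => n0 n1 n2 n3.
  apply: hP; apply/negP; rewrite !inE => /or4P[] /eqP hk;
    [apply: n0 | apply: n1 | apply: n2 | apply: n3]; by rewrite hk.
Qed.

End Lattice.

Section QuadraticForm.
Variables (R : realType) (a b c : R).
Local Notation Q := (qform a b c).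

Definition qpolar (p q : pt R) : R := Q (padd p q) - Q p - Q q.

Lemma qform_pzscale (m : int) (w : pt R) : Q (pzscale m w) = m%:~R ^+ 2 * Q w.
Proof. by rewrite /qform /pzscale /=; ring. Qed.

Lemma shortest_coords_coprime (e1 e2 : pt R) (k : int * int) : pos_def a b c ->
  zcomb e1 e2 k <> (0, 0) ->
  (forall w, in_lattice e1 e2 w -> w <> (0, 0) -> Q (zcomb e1 e2 k) <= Q w) ->
  gcdz k.1 k.2 = 1.
Proof.
move=> Qpd k0 kmin.
have [q1 kq1] := dvdzP (dvdz_gcdl k.1 k.2).
have [q2 kq2] := dvdzP (dvdz_gcdr k.1 k.2).
set g := gcdz k.1 k.2 in kq1 kq2 *.
have ek : zcomb e1 e2 k = pzscale g (zcomb e1 e2 (q1, q2)).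
  by rewrite /zcomb /padd /pzscale kq1 kq2 /= !intrM; congr pair; ring.
have w0 : zcomb e1 e2 (q1, q2) <> (0, 0).
  by move=> h; apply: k0; rewrite ek h /pzscale /= mulr0.
have g0 : g != 0.
  rewrite gcdz_eq0; apply/negP => /andP[/eqP m0 /eqP n0]; apply: k0.
  by rewrite /zcomb /padd /pzscale m0 n0 /=; congr pair; ring.
have := kmin _ (zcomb_in_lattice _ _ _) w0; rewrite ek qform_pzscale.
rewrite ger_pMl ?Qpd // expr2 -intrM lerz1.
have : 0 <= g by [].
nia.
Qed.

Lemma obtuse_basis (b1 b2 e1 f : pt R) : lattice_basis b1 b2 e1 f -> 0 < Q e1 ->
  exists e2, lattice_basis b1 b2 e1 e2 /\ - (2 * Q e1) <= qpolar e1 e2 <= 0.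
Proof.
move=> hf Q0; pose k := Num.floor (qpolar e1 f / (2 * Q e1)).
exists (zcomb e1 f (k, -1)); split.
  rewrite -[X in lattice_basis _ _ X _](zcomb10 e1 f).
  by apply: lattice_basis_unimodular => //; rewrite /zdet /=; lia.
have -> : qpolar e1 (zcomb e1 f (k, -1)) = k%:~R * (2 * Q e1) - qpolar e1 f.
  by rewrite /qpolar /qform /zcomb /padd /pzscale /=; ring.
have Q2 : 0 < 2 * Q e1 by rewrite mulr_gt0.
have := floor_le (qpolar e1 f / (2 * Q e1)); rewrite ler_pdivlMr // -/k.
have := floorD1_gt (qpolar e1 f / (2 * Q e1)); rewrite ltr_pdivrMr // -/k intrD.
by move=> *; apply/andP; split; lra.
Qed.

Lemma qform_sub_selling_dist (e1 e2 : pt R) (s t : R) (k : int * int) :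
  2 * Q (psub (rcomb e1 e2 s t) (zcomb e1 e2 k)) =
  selling_dist (- qpolar e1 e2) (2 * Q e1 + qpolar e1 e2) (2 * Q e2 + qpolar e1 e2) s t k.
Proof.
rewrite /selling_dist /selling_form /qpolar /qform /psub /rcomb /zcomb /padd /pzscale /=.
by ring.
Qed.

(* The three conditions on qpolar say that (e1, e2, -e1-e2) is an obtuse superbase. *)
Lemma obtuse_basis_holds_off_parallelogram (e1 e2 v : pt R) (cmin l : R) :
  pdet e1 e2 <> 0 ->
  qpolar e1 e2 <= 0 -> - (2 * Q e1) <= qpolar e1 e2 -> - (2 * Q e2) <= qpolar e1 e2 ->
  (forall k, k != 0 -> l <= Q (zcomb e1 e2 k)) ->
  (forall k, cmin <= Q (psub v (zcomb e1 e2 k))) ->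
  holds_off_parallelogram (fun k => cmin + l <= Q (psub v (zcomb e1 e2 k))).
Proof.
move=> hdet; have [s [t ->]] := rcomb_coords v hdet.
move=> g_le0 g_ge1 g_ge2 l_le c_le.
have l1 := l_le (1, 0) isT; have l2 := l_le (0, 1) isT; have l3 := l_le (1, 1) isT.
rewrite zcomb10 in l1; rewrite zcomb01 in l2; rewrite zcomb11 in l3.
set g := qpolar e1 e2 in g_le0 g_ge1 g_ge2.
apply: (holds_off_parallelogram_sub (P := fun k => 2 * cmin + 2 * l <=
  selling_dist (- g) (2 * Q e1 + g) (2 * Q e2 + g) s t k)).
  by move=> k; rewrite -qform_sub_selling_dist; lra.
apply: selling_dist_holds_off_parallelogram.
  by move: l3; rewrite /g /qpolar in g_le0 g_ge1 g_ge2 *; split; split; lra.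
by move=> k; rewrite -qform_sub_selling_dist; have := c_le k; lra.
Qed.

End QuadraticForm.

Theorem lemma4p7 (R : realType) (a b c : R) (b1 b2 v : pt R) (cmin lam : R) :
  pos_def a b c ->
  pdet b1 b2 <> 0 ->
  (* cmin = min_{w in Lambda} Q(v - w) *)
  (exists w, in_lattice b1 b2 w /\ qform a b c (psub v w) = cmin) ->
  (forall w, in_lattice b1 b2 w -> cmin <= qform a b c (psub v w)) ->
  (* lam = min_{w in Lambda \ {0}} Q(w) *)
  (exists w, [/\ in_lattice b1 b2 w, w <> (0, 0) & qform a b c w = lam]) ->
  (forall w, in_lattice b1 b2 w -> w <> (0, 0) -> lam <= qform a b c w) ->
  exists w0 u1 u2 : pt R,
    [/\ in_lattice b1 b2 w0, lattice_basis b1 b2 u1 u2 &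
      forall w, in_lattice b1 b2 w ->
        w <> w0 -> w <> padd w0 u1 -> w <> padd w0 u2 -> w <> padd (padd w0 u1) u2 ->
        cmin + lam <= qform a b c (psub v w)].
Proof.
move=> Qpd hb _ c_le [e [/in_latticeP[k ek] e0 <-]] lam_le.
have hk : gcdz k.1 k.2 = 1.
  by apply: (shortest_coords_coprime (e1 := b1) (e2 := b2) Qpd); rewrite -ek.
have [f hf] := coprime_coords_extend_to_basis (lattice_basis_refl hb) hk.
rewrite -ek in hf.
have [e2 [he2 /andP[g_ge g_le]]] := obtuse_basis hf (Qpd _ e0).
have [e_in e2_in det2 _] := he2.
have in_L j : in_lattice b1 b2 (zcomb e e2 j).
  exact: in_lattice_trans e_in e2_in (zcomb_in_lattice _ _ _).
have e_le j : j != 0 -> qform a b c e <= qform a b c (zcomb e e2 j).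
  by move=> j0; apply: lam_le (in_L j) (zcomb_neq0 det2 j0).
apply: (lattice_parallelogram
  (P := fun w => cmin + qform a b c e <= qform a b c (psub v w)) he2).
apply: obtuse_basis_holds_off_parallelogram => //.
  by have := e_le (0, 1) isT; rewrite zcomb01; lra.
by move=> j; apply: c_le.
Qed.
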